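(* Let $i\ge1$ and let $(a_j)_{j\ge1}$ satisfy $\delta_0\le a_j\le Aj$ for all $j\ge1$, for some $A>0$ and $\delta_0>0$. Let $y_0\in\mathcal X^+_{1,i}$ with $y_{i,0}>0$, and let $y$ be the solution of $dy/dt=F(y)$, $y(0)=y_0$. Let $$t_*:=\sup\{t>0:\ y_i(s)>0 \text{ for all } s\in[0,t)\}.$$ Then $t_*\in(0,\infty)$.
   Context: $\|x\|_{1,1}=\sum_j j|x_j|$, $\mathcal X_{1,1}=\{x:\|x\|_{1,1}<\infty\}$, $\mathcal X_{1,i}=\{x\in\mathcal X_{1,1}:x_j=0 \text{ for } j<i\}$, and $\mathcal X^+_{1,i}$ is the subset with nonnegative entries. $F$ is defined by - $F_j(y)=0$ for $j<i$; - $F_i(y)=-a_iy_i-\sum_{j\ge i}a_jy_j$; - $F_j(y)=a_{j-i}y_{j-i}-a_jy_j$ for $j\ge i+1$. The solution $y\in C([0,\infty);\mathcal X_{1,i})$, with $C^1$ components, exists and is unique. *)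

(* classical reals. Sequences x = (x_j)_{j>=1} are modelled as
   nat -> R; the index 0 is forced to be 0 by membership in X_{1,i}, i >= 1. *)
From Stdlib Require Import Reals.
Open Scope R_scope.

Definition series_cv (f : nat -> R) (l : R) : Prop :=
  Un_cv (fun n => sum_f_R0 f n) l.

Definition in_X11 (x : nat -> R) : Prop :=
  exists l, series_cv (fun j => INR j * Rabs (x j)) l.

Definition in_X1i (i : nat) (x : nat -> R) : Prop :=
  in_X11 x /\ (forall j, (j < i)%nat -> x j = 0).

Definition in_X1i_pos (i : nat) (x : nat -> R) : Prop :=
  in_X1i i x /\ (forall j, 0 <= x j).

Definition dist11_le (x z : nat -> R) (e : R) : Prop :=
  forall n, sum_f_R0 (fun j => INR j * Rabs (x j - z j)) n <= e.

(* v = F_j(x), with F as in the paper (the series in F_i is required to converge) *)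
Definition F_rel (a : nat -> R) (i : nat) (x : nat -> R) (j : nat) (v : R) : Prop :=
  ((j < i)%nat -> v = 0) /\
  (j = i -> exists S, series_cv (fun k => a (i + k)%nat * x (i + k)%nat) S /\
                      v = - a i * x i - S) /\
  ((i < j)%nat -> v = a (j - i)%nat * x (j - i)%nat - a j * x j).

Definition deriv_on_nonneg (f f' : R -> R) : Prop :=
  (forall t, 0 < t -> derivable_pt_lim f t (f' t)) /\
  (forall eps, 0 < eps -> exists delta, 0 < delta /\
     forall h, 0 < h < delta -> Rabs ((f h - f 0) / h - f' 0) < eps).

Definition cont_on_nonneg (g : R -> R) : Prop :=
  forall t, 0 <= t -> forall eps, 0 < eps -> exists delta, 0 < delta /\
    forall s, 0 <= s -> Rabs (s - t) < delta -> Rabs (g s - g t) < eps.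

Definition is_solution (a : nat -> R) (i : nat) (y0 : nat -> R)
    (y : R -> nat -> R) : Prop :=
  y 0 = y0 /\
  (forall t, 0 <= t -> in_X1i i (y t)) /\
  (forall t, 0 <= t -> forall eps, 0 < eps -> exists delta, 0 < delta /\
     forall s, 0 <= s -> Rabs (s - t) < delta -> dist11_le (y s) (y t) eps) /\
  exists dy : R -> nat -> R,
    forall j, deriv_on_nonneg (fun t => y t j) (fun t => dy t j) /\
              cont_on_nonneg (fun t => dy t j) /\
              (forall t, 0 <= t -> F_rel a i (y t) j (dy t j)).

From Stdlib Require Import Reals Lra Lia Psatz Classical Arith Wf_nat.
Open Scope R_scope.

(* Positivity of t_* is continuity of y_i at 0.  Finiteness is
   proved by contradiction: if y_i > 0 forever, then all components stay
   nonnegative (integrating factor), y_i decreases, and the mass leaving y_i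
   feeds the chain y_{2i}, y_{3i}, ...  For K >= 1 put T_n = y_{2i} + ... + y_{(n+1)i} and
   W_K = T_1 + ... + T_K; then W_K' = K a_i y_i - Q_K with
   Q_K = sum_{m=2}^{K+1} a_{mi} y_{mi}, while y_i' <= -2 a_i y_i - Q_K.  Hence
   V = W_K - y_i increases, at rate >= (K+2) delta0 y_i(1) on [0,1]; for K large
   this forces W_K >= 2 delta0 y_i(1) on [1,oo), so Q_K >= delta0 W_K / K is
   bounded below by a constant c > 0 there and y_i' <= -c drives y_i below 0.
   The file proves, in order: calculus facts on intervals, facts on partial
   sums, the chain sums, the a priori estimates under the hypothesis
   "y_i > 0 forever" (section Depletion), and finally the theorem. *)

Lemma deriv_plus f g x l1 l2 : derivable_pt_lim f x l1 -> derivable_pt_lim g x l2 ->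
  derivable_pt_lim (fun t => f t + g t) x (l1 + l2).
Proof. intros; apply (derivable_pt_lim_plus f g); auto. Qed.

Lemma deriv_minus f g x l1 l2 : derivable_pt_lim f x l1 -> derivable_pt_lim g x l2 ->
  derivable_pt_lim (fun t => f t - g t) x (l1 - l2).
Proof. intros; apply (derivable_pt_lim_minus f g); auto. Qed.

Lemma deriv_eq f x l l' : derivable_pt_lim f x l -> l = l' -> derivable_pt_lim f x l'.
Proof. intros H ->; exact H. Qed.

Lemma increment_lower_bound (g g' : R -> R) (c s t : R) : s <= t ->
  (forall r, s <= r <= t -> derivable_pt_lim g r (g' r)) ->
  (forall r, s <= r <= t -> c <= g' r) -> g s + c * (t - s) <= g t.
Proof.
  intros Hst Hd Hc. destruct (Rle_lt_or_eq_dec _ _ Hst) as [Hlt|<-].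
  - destruct (MVT_cor2 g g' s t Hlt Hd) as [r [Hgr Hr]].
    assert (c <= g' r) by (apply Hc; lra). nra.
  - lra.
Qed.

(* Integrating factor: if g' + c g >= 0 on [0,t] and g 0 >= 0, then g t >= 0,
   since exp(c r) g(r) is nondecreasing. *)
Lemma nonneg_by_integrating_factor (g g' : R -> R) (c t : R) : 0 <= t ->
  (forall r, 0 <= r <= t -> derivable_pt_lim g r (g' r)) ->
  (forall r, 0 <= r <= t -> 0 <= g' r + c * g r) -> 0 <= g 0 -> 0 <= g t.
Proof.
  intros Ht Hd Hg Hg0.
  assert (Hexp : forall r, derivable_pt_lim (fun s => exp (c * s)) r (exp (c * r) * c)).
  { intro r. apply (derivable_pt_lim_comp (fun s => c * s) exp).
    - apply deriv_eq with (c * 1); [|ring].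
      apply (derivable_pt_lim_scal id), derivable_pt_lim_id.
    - apply derivable_pt_lim_exp. }
  assert (Hm : exp (c * 0) * g 0 + 0 * (t - 0) <= exp (c * t) * g t).
  { apply (increment_lower_bound (fun r => exp (c * r) * g r)
             (fun r => exp (c * r) * c * g r + exp (c * r) * g' r)); auto.
    - intros r Hr. apply (derivable_pt_lim_mult (fun s => exp (c * s)) g); auto.
    - intros r Hr. pose proof (exp_pos (c * r)). specialize (Hg r Hr).
      replace (exp (c * r) * c * g r + exp (c * r) * g' r)
        with (exp (c * r) * (g' r + c * g r)) by ring.
      apply Rmult_le_pos; lra. }
  rewrite Rmult_0_r, exp_0 in Hm. pose proof (exp_pos (c * t)). nra.
Qed.

(* A function with a one-sided derivative at 0 is extended affinely to
   t < 0, so that the extension is two-sided differentiable on [0,oo) and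
   the interval lemmas above apply up to the endpoint 0. *)
Definition extend_left (f f' : R -> R) (t : R) : R :=
  if Rlt_dec t 0 then f 0 + f' 0 * t else f t.

Lemma extend_left_eq f f' t : 0 <= t -> extend_left f f' t = f t.
Proof. intro; unfold extend_left; destruct (Rlt_dec t 0); lra. Qed.

Lemma extend_left_deriv f f' : deriv_on_nonneg f f' ->
  forall t, 0 <= t -> derivable_pt_lim (extend_left f f') t (f' t).
Proof.
  intros [Hpos H0] t Ht. destruct (Rle_lt_or_eq_dec _ _ Ht) as [Hlt|<-].
  - intros eps Heps. destruct (Hpos t Hlt eps Heps) as [d Hd].
    assert (Hm : 0 < Rmin d t) by (apply Rmin_pos; [apply cond_pos|lra]).
    exists (mkposreal _ Hm). intros h Hh Hh2. simpl in Hh2.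
    pose proof (Rmin_l d t). pose proof (Rmin_r d t).
    assert (Rabs h < t) as Hht by lra. apply Rabs_def2 in Hht.
    rewrite !extend_left_eq by lra. apply Hd; auto. lra.
  - intros eps Heps. destruct (H0 eps Heps) as [d [Hd1 Hd2]].
    exists (mkposreal _ Hd1). intros h Hh Hh2. simpl in Hh2.
    rewrite Rplus_0_l, (extend_left_eq f f' 0) by lra.
    destruct (Rlt_dec h 0) as [Hn|Hn].
    + unfold extend_left. destruct (Rlt_dec h 0); [|lra].
      replace ((f 0 + f' 0 * h - f 0) / h - f' 0) with 0 by (field; lra).
      rewrite Rabs_R0; lra.
    + rewrite extend_left_eq by lra. apply Hd2. apply Rabs_def2 in Hh2. lra.
Qed.

Lemma positive_near (f : R -> R) (x : R) : continuity_pt f x -> 0 < f x ->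
  exists d, 0 < d /\ forall s, Rabs (s - x) < d -> 0 < f s.
Proof.
  intros Hc Hx. destruct (Hc (f x / 2) ltac:(lra)) as [d [Hd Hnear]].
  exists d. split; auto. intros s Hs.
  destruct (Req_dec s x) as [->|Hne]; auto.
  assert (H : Rabs (f s - f x) < f x / 2).
  { apply (Hnear s). split; [split; [exact I|auto]|exact Hs]. }
  apply Rabs_def2 in H. lra.
Qed.

Lemma partial_sum_le_series f l n : (forall k, 0 <= f k) -> series_cv f l ->
  sum_f_R0 f n <= l.
Proof.
  intros Hf Hc. apply (growing_ineq (fun n => sum_f_R0 f n)); auto.
  intro m. simpl. specialize (Hf (S m)). lra.
Qed.

Lemma partial_sum_add_later f n p : (forall k, 0 <= f k) -> (0 < p)%nat ->
  sum_f_R0 f n + f (n + p)%nat <= sum_f_R0 f (n + p).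
Proof.
  intros Hf. induction p as [|p IH]; intros Hp; [lia|].
  destruct p as [|p].
  - replace (n + 1)%nat with (S n) by lia. simpl. lra.
  - replace (n + S (S p))%nat with (S (n + S p)) by lia. simpl.
    assert (H := IH ltac:(lia)). specialize (Hf (n + S p)%nat). lra.
Qed.

Fixpoint chain_sum (i : nat) (x : nat -> R) (n : nat) : R :=
  match n with 0%nat => 0 | S n => chain_sum i x n + x ((n + 2) * i)%nat end.
Fixpoint chain_weight (i : nat) (x : nat -> R) (K : nat) : R :=
  match K with 0%nat => 0 | S K => chain_weight i x K + chain_sum i x (S K) end.
Fixpoint chain_flux (i : nat) (a x : nat -> R) (K : nat) : R :=
  match K with
  | 0%nat => 0
  | S K => chain_flux i a x K + a ((K + 2) * i)%nat * x ((K + 2) * i)%nat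
  end.

Lemma chain_weight_ext i x x' K : (forall j, x j = x' j) ->
  chain_weight i x K = chain_weight i x' K.
Proof.
  intro H. assert (Hs : forall n, chain_sum i x n = chain_sum i x' n).
  { induction n; simpl; [lra|rewrite IHn, H; lra]. }
  induction K; cbn [chain_weight]; [reflexivity|rewrite IHK, Hs; reflexivity].
Qed.

Lemma chain_sum_nonneg i x n : (forall j, 0 <= x j) -> 0 <= chain_sum i x n.
Proof. intro H; induction n; simpl; [lra|specialize (H ((n + 2) * i)%nat); lra]. Qed.

Lemma chain_weight_nonneg i x K : (forall j, 0 <= x j) -> 0 <= chain_weight i x K.
Proof.
  intro H; induction K; cbn [chain_weight]; [lra|].
  pose proof (chain_sum_nonneg i x (S K) H). lra.
Qed.

(* Each chain_sum is at most the last one, so W_K <= K T_K. *)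
Lemma chain_weight_le i x K : (forall j, 0 <= x j) ->
  chain_weight i x K <= INR K * chain_sum i x K.
Proof.
  intro H; induction K; cbn [chain_weight]; [simpl; lra|].
  assert (chain_sum i x K <= chain_sum i x (S K)).
  { simpl. specialize (H ((K + 2) * i)%nat). lra. }
  pose proof (pos_INR K). rewrite S_INR. nra.
Qed.

Lemma chain_flux_ge i a x K d : (1 <= i)%nat -> (forall j, 0 <= x j) ->
  (forall j, (1 <= j)%nat -> d <= a j) -> d * chain_sum i x K <= chain_flux i a x K.
Proof.
  intros Hi H Ha; induction K; simpl; [lra|].
  assert (d <= a ((K + 2) * i)%nat) by (apply Ha; nia).
  specialize (H ((K + 2) * i)%nat). nra.
Qed.

Lemma chain_flux_le_partial_sum i a x K : (1 <= i)%nat ->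
  (forall k, 0 <= a (i + k)%nat * x (i + k)%nat) ->
  a i * x i + chain_flux i a x K <= sum_f_R0 (fun k => a (i + k)%nat * x (i + k)%nat) (K * i).
Proof.
  intros Hi Hf. induction K.
  - simpl. rewrite Nat.add_0_r. lra.
  - cbn [chain_flux]. replace (S K * i)%nat with (K * i + i)%nat by ring.
    pose proof (partial_sum_add_later _ (K * i) i Hf ltac:(lia)) as H. simpl in H.
    replace (i + (K * i + i))%nat with ((K + 2) * i)%nat in H by ring. lra.
Qed.

(* Since W_K <= K T_K and Q_K >= d T_K, the flux controls the weighted sum. *)
Lemma chain_flux_dominates_weight i a x K d : (1 <= i)%nat -> 0 <= d ->
  (forall j, 0 <= x j) -> (forall j, (1 <= j)%nat -> d <= a j) ->
  d * chain_weight i x K <= INR K * chain_flux i a x K.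
Proof.
  intros Hi Hd Hx Ha.
  pose proof (chain_weight_le i x K Hx). pose proof (chain_flux_ge i a x K d Hi Hx Ha).
  pose proof (pos_INR K). nra.
Qed.

Section Depletion.
Variables (i : nat) (a : nat -> R) (delta0 : R) (y dy : R -> nat -> R).
Hypothesis i_pos : (1 <= i)%nat.
Hypothesis delta0_pos : 0 < delta0.
Hypothesis a_lower : forall j, (1 <= j)%nat -> delta0 <= a j.
Hypothesis y_init_nonneg : forall j, 0 <= y 0 j.
Hypothesis y_below_i : forall t, 0 <= t -> forall j, (j < i)%nat -> y t j = 0.
Hypothesis y_deriv : forall j, deriv_on_nonneg (fun t => y t j) (fun t => dy t j).
Hypothesis y_ode : forall t j, 0 <= t -> F_rel a i (y t) j (dy t j).
Hypothesis yi_pos : forall t, 0 <= t -> 0 < y t i.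

Let Y (j : nat) : R -> R := extend_left (fun t => y t j) (fun t => dy t j).

Lemma Y_eq j t : 0 <= t -> Y j t = y t j.
Proof. apply extend_left_eq. Qed.

Lemma Y_deriv j t : 0 <= t -> derivable_pt_lim (Y j) t (dy t j).
Proof. apply extend_left_deriv, y_deriv. Qed.

Lemma dy_above_i t j : 0 <= t -> (i < j)%nat ->
  dy t j = a (j - i)%nat * y t (j - i)%nat - a j * y t j.
Proof. intros Ht Hj. apply (proj2 (proj2 (y_ode t j Ht))), Hj. Qed.

(* All components stay nonnegative, by strong induction on j: for j > i the
   inflow a_{j-i} y_{j-i} is nonnegative, so the integrating factor applies. *)
Lemma y_nonneg j t : 0 <= t -> 0 <= y t j.
Proof.
  revert t. induction j as [j IH] using (well_founded_induction lt_wf). intros t Ht.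
  destruct (lt_eq_lt_dec j i) as [[Hlt|<-]|Hgt].
  - rewrite y_below_i; auto; lra.
  - left; auto.
  - rewrite <- Y_eq by exact Ht.
    apply (nonneg_by_integrating_factor (Y j) (fun r => dy r j) (a j)); auto.
    + intros r Hr. apply Y_deriv; lra.
    + intros r Hr. rewrite dy_above_i, Y_eq by (auto; lra).
      assert (0 <= y r (j - i)%nat) by (apply IH; [lia|lra]).
      assert (delta0 <= a (j - i)%nat) by (apply a_lower; lia). nra.
    + rewrite Y_eq by lra. auto.
Qed.

(* The loss rate of y_i dominates twice its own decay plus the chain flux,
   because the series in F_i contains the terms a_i y_i and a_{mi} y_{mi}. *)
Lemma dyi_upper t K : 0 <= t -> dy t i <= - 2 * a i * y t i - chain_flux i a (y t) K.
Proof.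
  intro Ht. destruct (proj1 (proj2 (y_ode t i Ht)) eq_refl) as [S [HS ->]].
  assert (Hnn : forall k, 0 <= a (i + k)%nat * y t (i + k)%nat).
  { intro k. assert (delta0 <= a (i + k)%nat) by (apply a_lower; lia).
    pose proof (y_nonneg (i + k) t Ht). nra. }
  pose proof (chain_flux_le_partial_sum i a (y t) K i_pos Hnn).
  pose proof (partial_sum_le_series _ S (K * i) Hnn HS). lra.
Qed.

Lemma yi_nonincreasing s t : 0 <= s -> s <= t -> y t i <= y s i.
Proof.
  intros Hs Hst. rewrite <- (Y_eq i s), <- (Y_eq i t) by lra.
  assert (H := increment_lower_bound (fun r => - Y i r) (fun r => - dy r i) 0 s t Hst).
  cut (- Y i s + 0 * (t - s) <= - Y i t); [lra|]. apply H.
  - intros r Hr. apply (derivable_pt_lim_opp (Y i)), Y_deriv. lra.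
  - intros r Hr. pose proof (dyi_upper r 0 ltac:(lra)). simpl in *.
    pose proof (yi_pos r ltac:(lra)). assert (delta0 <= a i) by (apply a_lower; lia). nra.
Qed.

Lemma chain_sum_deriv n t : 0 <= t ->
  derivable_pt_lim (fun s => chain_sum i (fun j => Y j s) n) t
    (a i * y t i - a ((n + 1) * i)%nat * y t ((n + 1) * i)%nat).
Proof.
  intro Ht. induction n.
  - simpl. apply deriv_eq with 0; [apply derivable_pt_lim_const|].
    rewrite Nat.add_0_r. ring.
  - simpl chain_sum. eapply deriv_eq; [apply deriv_plus; [apply IHn|apply Y_deriv, Ht]|].
    rewrite dy_above_i by (auto; nia).
    replace ((n + 2) * i - i)%nat with ((n + 1) * i)%nat by nia.
    replace ((S n + 1) * i)%nat with ((n + 2) * i)%nat by ring. ring.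
Qed.

Lemma chain_weight_deriv K t : 0 <= t ->
  derivable_pt_lim (fun s => chain_weight i (fun j => Y j s) K) t
    (INR K * a i * y t i - chain_flux i a (y t) K).
Proof.
  intro Ht. induction K.
  - simpl. apply deriv_eq with 0; [apply derivable_pt_lim_const|ring].
  - cbn [chain_weight]. eapply deriv_eq;
      [apply deriv_plus; [apply IHK|apply chain_sum_deriv, Ht]|].
    cbn [chain_flux]. rewrite S_INR.
    replace ((S K + 1) * i)%nat with ((K + 2) * i)%nat by ring. ring.
Qed.

(* The Lyapunov function V_K = W_K - y_i; it grows at rate >= (K+2) a_i y_i. *)
Let V (K : nat) (s : R) : R := chain_weight i (fun j => Y j s) K - Y i s.

Lemma V_eq K t : 0 <= t -> V K t = chain_weight i (y t) K - y t i.
Proof.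
  intro Ht. unfold V. rewrite Y_eq by exact Ht.
  rewrite (chain_weight_ext i _ (y t)); [reflexivity|]. intro j; apply Y_eq, Ht.
Qed.

Lemma V_increment K c s t : 0 <= s <= t ->
  (forall r, s <= r <= t -> c <= (INR K + 2) * a i * y r i) -> V K s + c * (t - s) <= V K t.
Proof.
  intros Hst Hc. apply (increment_lower_bound (V K)
    (fun r => INR K * a i * y r i - chain_flux i a (y r) K - dy r i)); [lra| |].
  - intros r Hr. apply deriv_minus; [apply chain_weight_deriv|apply Y_deriv]; lra.
  - intros r Hr. pose proof (dyi_upper r K ltac:(lra)). specialize (Hc r Hr). lra.
Qed.

Lemma chain_weight_large K t : y 0 i <= INR K * delta0 * y 1 i -> 1 <= t ->
  2 * delta0 * y 1 i <= chain_weight i (y t) K.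
Proof.
  intros HK Ht.
  assert (Hai : delta0 <= a i) by (apply a_lower; lia).
  assert (H01 : V K 0 + (INR K + 2) * delta0 * y 1 i * (1 - 0) <= V K 1).
  { apply V_increment; [lra|]. intros r Hr.
    pose proof (yi_nonincreasing r 1 ltac:(lra) ltac:(lra)).
    pose proof (yi_pos 1 ltac:(lra)). pose proof (pos_INR K).
    assert (delta0 * y 1 i <= a i * y r i) by (apply Rmult_le_compat; lra).
    rewrite !Rmult_assoc. apply Rmult_le_compat_l; lra. }
  assert (H1t : V K 1 + 0 * (t - 1) <= V K t).
  { apply V_increment; [lra|]. intros r Hr.
    pose proof (yi_pos r ltac:(lra)). pose proof (pos_INR K).
    repeat apply Rmult_le_pos; lra. }
  rewrite !V_eq in * by lra.
  pose proof (chain_weight_nonneg i (y 0) K (fun j => y_nonneg j 0 ltac:(lra))).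
  pose proof (yi_pos t ltac:(lra)). lra.
Qed.

(* Hence the flux Q_K >= delta0 W_K / K is bounded below from time 1 on. *)
Lemma chain_flux_large K t : (0 < K)%nat -> y 0 i <= INR K * delta0 * y 1 i -> 1 <= t ->
  2 * delta0 * delta0 * y 1 i / INR K <= chain_flux i a (y t) K.
Proof.
  intros HK0 HK Ht. assert (HKpos : 0 < INR K) by (apply lt_0_INR; exact HK0).
  pose proof (chain_weight_large K t HK Ht) as Hweight.
  pose proof (chain_flux_dominates_weight i a (y t) K delta0 i_pos ltac:(lra)
                (fun j => y_nonneg j t ltac:(lra)) a_lower) as Hdom.
  apply (Rmult_le_reg_l (INR K)); [exact HKpos|].
  replace (INR K * (2 * delta0 * delta0 * y 1 i / INR K))
    with (delta0 * (2 * delta0 * y 1 i)) by (field; lra).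
  apply Rle_trans with (2 := Hdom). apply Rmult_le_compat_l; lra.
Qed.

Lemma yi_linear_decay K c T : 1 <= T -> (forall t, 1 <= t -> c <= chain_flux i a (y t) K) ->
  y T i <= y 1 i - c * (T - 1).
Proof.
  intros HT Hflux.
  assert (Hdrop : - Y i 1 + c * (T - 1) <= - Y i T).
  { apply (increment_lower_bound (fun r => - Y i r) (fun r => - dy r i)); auto.
    - intros r Hr. apply (derivable_pt_lim_opp (Y i)), Y_deriv. lra.
    - intros r Hr. pose proof (dyi_upper r K ltac:(lra)). pose proof (Hflux r ltac:(lra)).
      pose proof (yi_pos r ltac:(lra)). assert (delta0 <= a i) by (apply a_lower; lia).
      nra. }
  rewrite !Y_eq in Hdrop by lra. lra.
Qed.

(* Choosing K with K delta0 y_i(1) >= y_i(0), the linear decay makes y_i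
   vanish by time 1 + y_i(1)/c, which is absurd. *)
Lemma yi_pos_forever_absurd : False.
Proof.
  set (m1 := y 1 i). assert (Hm1 : 0 < m1) by (apply yi_pos; lra).
  destruct (INR_unbounded (y 0 i / (delta0 * m1))) as [n Hn].
  assert (HKbig : y 0 i <= INR (S n) * delta0 * m1).
  { assert (0 < delta0 * m1) by nra. rewrite S_INR.
    replace (y 0 i) with (y 0 i / (delta0 * m1) * (delta0 * m1)) by (field; lra). nra. }
  set (c := 2 * delta0 * delta0 * m1 / INR (S n)).
  assert (Hc : 0 < c).
  { apply Rdiv_lt_0_compat; [repeat apply Rmult_lt_0_compat; lra|apply lt_0_INR; lia]. }
  set (T := 1 + m1 / c).
  assert (HT : 1 <= T) by (pose proof (Rdiv_lt_0_compat m1 c Hm1 Hc); unfold T; lra).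
  pose proof (yi_linear_decay (S n) c T HT
                (fun t Ht => chain_flux_large (S n) t ltac:(lia) HKbig Ht)) as Hdecay.
  replace (c * (T - 1)) with m1 in Hdecay by (unfold T; field; lra).
  pose proof (yi_pos T ltac:(lra)). fold m1 in Hdecay. lra.
Qed.
End Depletion.

Lemma positive_on_initial_interval (f f' : R -> R) : deriv_on_nonneg f f' -> 0 < f 0 ->
  exists d, 0 < d /\ forall s, 0 <= s < d -> 0 < f s.
Proof.
  intros Hf Hf0.
  assert (Hc : continuity_pt (extend_left f f') 0).
  { apply derivable_continuous_pt. exists (f' 0). apply extend_left_deriv; auto; lra. }
  rewrite <- (extend_left_eq f f' 0) in Hf0 by lra.
  destruct (positive_near _ _ Hc Hf0) as [d [Hd Hpos]].
  exists d. split; auto. intros s Hs. rewrite <- (extend_left_eq f f' s) by lra.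
  apply Hpos. rewrite Rminus_0_r, Rabs_right; lra.
Qed.

Lemma first_exit_time (f : R -> R) :
  (exists d, 0 < d /\ forall s, 0 <= s < d -> 0 < f s) ->
  (exists T, 0 <= T /\ f T <= 0) ->
  exists tstar, 0 < tstar /\
    is_lub (fun t => 0 < t /\ forall s, 0 <= s < t -> 0 < f s) tstar.
Proof.
  intros [d [Hd Hpos]] [T [HT HfT]].
  set (P := fun t => 0 < t /\ forall s, 0 <= s < t -> 0 < f s).
  assert (Hbound : bound P).
  { exists T. intros t [Ht Hft]. destruct (Rle_lt_dec t T) as [h|h]; auto.
    specialize (Hft T (conj HT h)). lra. }
  destruct (completeness P Hbound (ex_intro _ d (conj Hd Hpos))) as [m Hm].
  exists m. split; auto.
  assert (d <= m) by (apply (proj1 Hm); split; auto). lra.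
Qed.

Theorem proposition2p4 (i : nat) (a : nat -> R) (A delta0 : R)
  (y0 : nat -> R) (y : R -> nat -> R) :
  (1 <= i)%nat ->
  0 < A -> 0 < delta0 ->
  (forall j, (1 <= j)%nat -> delta0 <= a j /\ a j <= A * INR j) ->
  in_X1i_pos i y0 -> 0 < y0 i ->
  is_solution a i y0 y ->
  exists tstar, 0 < tstar /\
    is_lub (fun t => 0 < t /\ forall s, 0 <= s < t -> 0 < y s i) tstar.
Proof.
  intros Hi _ Hd0 Ha [_ Hy0_nonneg] Hyi0 [<- [HX [_ [dy Hdy]]]].
  apply first_exit_time.
  - apply (positive_on_initial_interval _ (fun t => dy t i)); [apply Hdy|exact Hyi0].
  - apply NNPP. intro Hnever. apply (yi_pos_forever_absurd i a delta0 y dy); auto.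
    + intros j Hj. apply (Ha j Hj).
    + intros t Ht. apply (HX t Ht).
    + intro j. apply Hdy.
    + intros t j Ht. apply Hdy, Ht.
    + intros t Ht. apply Rnot_le_lt. intro Hle. apply Hnever. exists t. auto.
Qed.
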